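(* Consider Algorithm MWHVC (described in the context) run on a hypergraph $G=(V,E)$ of rank $f$ and maximum degree $\Delta$ with nonnegative vertex weights $w$, with parameters $\varepsilon\in(0,1]$, $\beta=\varepsilon/(f+\varepsilon)$ and multiplier $\alpha>1$. For every hyperedge $e$, the number of $e$-raise iterations is at most $\log_\alpha\Delta$.
   Context: Let $G=(V,E)$ be a hypergraph: each hyperedge is a nonempty subset of $V$ of size at most $f$ (rank $f$). Vertices have nonnegative weights $w(v)$. For $v\in V$, $E(v)=\{e\in E: v\in e\}$; $\Delta=\max_v |E(v)|\ge 3$. A hyperedge $e$ is covered by $C\subseteq V$ if $e\cap C\neq\emptyset$. The computation is distributed in synchronous rounds on the bipartite network with node set $V\cup E$ and a link between $v$ and $e$ iff $v\in e$. Parameters: $\varepsilon\in(0,1]$, $\beta=\varepsilon/(f+\varepsilon)$, and a multiplier $\alpha>1$. Algorithm MWHVC: Initialize $C\gets\emptyset$ and $E'(v)\gets E(v)$ for every $v$. Iteration $0$: every hyperedge $e$ sets $\mathrm{deal}_0(e)=\beta\cdot\min_{v\in e} w(v)/|E(v)|$ and $\delta_0(e)=\mathrm{deal}_0(e)$. For $i=1,2,\dots$: (a) every vertex $v\notin C$ (not terminated) checks whether $\sum_{e\in E(v)}\delta_{i-1}(e)\ge(1-\beta)w(v)$; if so, $v$ joins $C$, tells every $e\in E'(v)$ that $e$ is covered, and terminates. (b) Every uncovered hyperedge that receives such a message becomes covered, informs all its vertices, and terminates. (c) Every vertex $v\notin C$ that is told $e$ is covered sets $E'(v)\gets E'(v)\setminus\{e\}$;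 if $E'(v)=\emptyset$, $v$ terminates without joining $C$. (d) Every vertex $v\notin C$ sends ''raise'' to all $e\in E'(v)$ if $\sum_{e\in E'(v)}\mathrm{deal}_{i-1}(e)\le(\beta/\alpha)w(v)$, and otherwise sends ''stuck'' to all $e\in E'(v)$. (e) Every uncovered hyperedge $e$ sets $\mathrm{deal}_i(e)=\mathrm{deal}_{i-1}(e)$ if it received some ''stuck'' message, and $\mathrm{deal}_i(e)=\alpha\cdot\mathrm{deal}_{i-1}(e)$ otherwise, and $\delta_i(e)=\delta_{i-1}(e)+\mathrm{deal}_i(e)$. An iteration $i\ge 1$ is an $e$-raise iteration if $\mathrm{deal}_i(e)=\alpha\cdot\mathrm{deal}_{i-1}(e)$. *)

From HB Require Import structures.
From mathcomp Require Import all_boot all_order all_algebra.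
From mathcomp Require Import reals exp.
Set Implicit Arguments. Unset Strict Implicit. Unset Printing Implicit Defensive.
Import Order.TTheory GRing.Theory Num.Theory.
Local Open Scope ring_scope.

(* Simulation of Algorithm MWHVC.
   V : vertices, E : (index type of) hyperedges, [edges e] : the vertex set of e. *)
Section MWHVC.
Variables (R : realType) (V E : finType) (edges : E -> {set V}) (w : V -> R).
Variables (f : nat) (eps alpha : R).

Definition beta : R := eps / (f%:R + eps).

Definition Eof (v : V) : {set E} := [set e | v \in edges e].

Definition maxdeg : nat := \max_(v : V) #|Eof v|.

Definition ratio (v : V) : R := w v / #|Eof v|%:R.

(* min_{v in e} w(v)/|E(v)| (the hyperedge is nonempty) *)
Definition minratio (e : E) : R :=
  match [pick v in edges e] with
  | Some v0 => \big[Num.min/ratio v0]_(v in edges e) ratio v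
  | None => 0
  end.

Record state := State {
  inC : {set V};
  term : {set V};       (* terminated vertices (C included) *)
  covered : {set E};
  Ep : V -> {set E};
  deal : E -> R;
  delta : E -> R
}.

Definition init : state :=
  State set0 set0 set0 Eof (fun e => beta * minratio e) (fun e => beta * minratio e).

(* one iteration i >= 1, steps (a)-(e); covered hyperedges keep their
   (frozen) deal and delta values. *)
Definition step (s : state) : state :=
  let joins := [set v | (v \notin term s) &&
                 ((1 - beta) * w v <= \sum_(e in Eof v) delta s e)] in
  let newcov := [set e | (e \notin covered s) && [exists v in joins, e \in Ep s v]] in
  let cov' := covered s :|: newcov in
  let Ep' := fun v => if v \in term s :|: joins then Ep s v else Ep s v :\: newcov in
  let term' := term s :|: joins :|:
               [set v | (v \notin term s :|: joins) && (Ep' v == set0)] in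
  let stuck := fun e => [exists v, [&& v \notin term', e \in Ep' v &
                   ~~ (\sum_(e' in Ep' v) deal s e' <= beta / alpha * w v)]] in
  let deal' := fun e => if (e \notin cov') && ~~ stuck e then alpha * deal s e
                        else deal s e in
  let delta' := fun e => if e \notin cov' then delta s e + deal' e else delta s e in
  State (inC s :|: joins) term' cov' Ep' deal' delta'.

Definition state_at (n : nat) : state := iter n step init.

(* iteration i >= 1 is an e-raise iteration: e is uncovered at step (e) of
   iteration i (so deal_i(e) is set by the algorithm) and
   deal_i(e) = alpha * deal_{i-1}(e). *)
Definition raise_iter (e : E) (i : nat) : bool :=
  [&& (0 < i)%N, e \notin covered (state_at i) &
      deal (state_at i) e == alpha * deal (state_at i.-1) e].

Definition num_raise (e : E) (n : nat) : nat := count (raise_iter e) (iota 1 n).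

End MWHVC.

From Pilot Require Import Defs.
From HB Require Import structures.
From mathcomp Require Import all_boot all_order all_algebra.
From mathcomp Require Import reals exp.
Import Order.TTheory GRing.Theory Num.Theory.
Local Open Scope ring_scope.
Set Implicit Arguments. Unset Strict Implicit. Unset Printing Implicit Defensive.

(* Fix e and a vertex v* of e attaining deal_0(e) = beta w(v* ) / |E(v* )|.  As
   long as e is uncovered, v* is active and e is in E'(v* ); so in an e-raise
   iteration v* did not send "stuck", i.e. deal_{i-1}(e) <= (beta/alpha) w(v* ).
   Since deal_{i-1}(e) = alpha^k deal_0(e) after k earlier raises, this gives
   alpha^(k+1) <= |E(v* )| <= Delta, and taking logarithms bounds k. *)

Lemma natr_le_ln_div_ln (R : realType) (a d : R) (k : nat) :
  1 < a -> a ^+ k <= d -> k%:R <= ln d / ln a.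
Proof.
move=> a_gt1 akd; have a_gt0 : 0 < a by apply: lt_trans a_gt1.
have d_gt0 : 0 < d by apply: lt_le_trans akd; rewrite exprn_gt0.
by rewrite ler_pdivlMr ?ln_gt0 // mulr_natl -lnXn // ler_ln ?posrE ?exprn_gt0.
Qed.

Lemma exprS_le_of_scaled_le (R : realFieldType) (a c N : R) k :
  0 < a -> 0 < c -> 0 < N -> a ^+ k * (c / N) <= c / a -> a ^+ k.+1 <= N.
Proof.
move=> a_gt0 c_gt0 N_gt0.
by rewrite mulrCA ler_pdivlMr // -mulrA ger_pMr // mulrAC ler_pdivrMr // mul1r -exprSr.
Qed.

Section RaiseBound.
Variables (R : realType) (V E : finType) (edges : E -> {set V}) (w : V -> R).
Variables (f : nat) (eps alpha : R).
Hypothesis edges_neq0 : forall e : E, (0 < #|edges e|)%N.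
Hypothesis w_ge0 : forall v, 0 <= w v.
Hypothesis eps_gt0 : 0 < eps.
Hypothesis alpha_gt1 : 1 < alpha.

Local Notation next := (step edges w f eps alpha).
Local Notation run n := (state_at edges w f eps alpha n).
Local Notation raise := (raise_iter edges w f eps alpha).
Local Notation nraise := (num_raise edges w f eps alpha).

Let alpha_gt0 : 0 < alpha. Proof. exact: lt_trans alpha_gt1. Qed.

Lemma beta_gt0 : 0 < beta f eps.
Proof. by rewrite divr_gt0 // ltr_wpDl ?ler0n. Qed.

Lemma minratio_attained e :
  exists2 v, v \in edges e & Defs.minratio edges w e = Defs.ratio edges w v.
Proof.
rewrite /Defs.minratio; case: pickP => [v0 v0e | edges0]; last first.
  by have := edges_neq0 e; rewrite (eq_card0 edges0).
elim/big_ind: _ => [| x y [vx vxe ->] [vy vye ->] | v ve]; try by exists v0 + exists v.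
by rewrite /Order.min; case: ifP; [exists vx | exists vy].
Qed.

Lemma card_Eof_gt0 e v : v \in edges e -> (0 < #|Eof edges v|)%N.
Proof. by move=> ve; apply/card_gt0P; exists e; rewrite inE. Qed.

Lemma uncovered_vertices_active e n v :
  e \notin covered (run n) -> v \in edges e ->
  (v \notin term (run n)) && (e \in Ep (run n) v).
Proof.
elim: n => [_ ve | n IH]; first by rewrite /= in_set0 inE.
rewrite [run n.+1]/= -/(state_at _ _ _ _ _ n) /step /=.
set newcov := [set e0 | _ & _]; set joins := [set v0 | _ & _].
rewrite in_setU negb_or => /andP[ecov enew] ve.
have /andP[vterm eEp] := IH ecov ve.
have vjoins : v \notin joins.
  apply: contra enew => vj; rewrite inE ecov; apply/existsP; exists v.
  by rewrite vj.
have vactive : v \notin term (run n) :|: joins by rewrite in_setU negb_or vterm.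
rewrite (negbTE vactive) in_setD enew eEp in_setU negb_or vactive.
rewrite inE vactive (negbTE vactive) /= andbT.
by apply/set0Pn; exists e; rewrite in_setD enew.
Qed.

Lemma deal_ge0 n e : 0 <= deal (run n) e.
Proof.
elim: n e => [|n IH] e /=.
  have [v _ ->] := minratio_attained e.
  by rewrite mulr_ge0 ?(ltW beta_gt0) // divr_ge0 ?ler0n.
by case: ifP => _; rewrite ?mulr_ge0 ?IH ?(ltW alpha_gt0).
Qed.

Lemma delta_ge0 n e : 0 <= delta (run n) e.
Proof.
elim: n e => [|n IH] e; first exact: (deal_ge0 0).
have := deal_ge0 n.+1 e; rewrite /= /step /= => deal_ge0.
by case: ifP => _; rewrite ?addr_ge0.
Qed.

Lemma num_raiseS e n : nraise e n.+1 = (nraise e n + raise e n.+1)%N.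
Proof. by rewrite /num_raise -{1}[n.+1]addn1 iotaD count_cat /= addn0 add1n. Qed.

Lemma deal_next_covered s e : e \in covered (next s) -> deal (next s) e = deal s e.
Proof. by rewrite /step /= => ->. Qed.

Lemma deal_next_cases s e :
  deal (next s) e = deal s e \/ deal (next s) e = alpha * deal s e.
Proof. by rewrite /step /=; case: ifP; [right | left]. Qed.

Lemma raise_iterS e n : raise e n.+1 =
  (e \notin covered (next (run n))) && (deal (next (run n)) e == alpha * deal (run n) e).
Proof. by []. Qed.

Lemma deal_run e n : deal (run n) e = alpha ^+ nraise e n * deal (run 0) e.
Proof.
elim: n => [|n IH]; first by rewrite mul1r.
rewrite num_raiseS raise_iterS.
case: (boolP (e \in covered (next (run n)))) => [ecov | _].
  by rewrite andFb addn0 -IH deal_next_covered.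
case: eqP => [-> | not_raised]; first by rewrite addn1 exprS -mulrA -IH.
by rewrite addn0 -IH; case: (deal_next_cases (run n) e).
Qed.

(* An active vertex cannot have zero weight: it would have joined C in step (a). *)
Lemma active_weight_gt0 s v :
  (forall e, 0 <= delta s e) -> v \notin term (next s) -> 0 < w v.
Proof.
move=> delta_s_ge0; rewrite /step /= !in_setU !negb_or inE => /andP[/andP[vt vj] _].
rewrite vt /= -ltNge in vj; rewrite lt_neqAle w_ge0 andbT.
by apply: contraTneq vj => <-; rewrite mulr0 -leNgt sumr_ge0.
Qed.

Lemma raised_deal_le s e v :
  (forall e', 0 <= deal s e') -> 0 < deal s e ->
  e \notin covered (next s) -> v \notin term (next s) -> e \in Ep (next s) v ->
  deal (next s) e = alpha * deal s e ->
  deal s e <= beta f eps / alpha * w v.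
Proof.
move=> deal_s_ge0 deal_e_gt0 ecov vterm eEp; rewrite /step /= in ecov vterm eEp *.
case: ifP => [/andP[_ /existsPn /(_ v) not_stuck] _ | _ fixed_eq]; last first.
  have : 0 < (alpha - 1) * deal s e by rewrite mulr_gt0 ?subr_gt0.
  by rewrite mulrBl mul1r -fixed_eq subrr ltxx.
have : ~~ ~~ (\sum_(e' in Ep (next s) v) deal s e' <= beta f eps / alpha * w v).
  by apply: contraNN not_stuck => not_le; apply/and3P.
rewrite negbK => /(le_trans _); apply.
by rewrite (bigD1 e) //= lerDl sumr_ge0.
Qed.

Lemma raise_expr_le_deg e vs n :
  vs \in edges e -> Defs.minratio edges w e = Defs.ratio edges w vs ->
  raise e n.+1 -> alpha ^+ (nraise e n).+1 <= #|Eof edges vs|%:R.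
Proof.
move=> vse min_vs /and3P[_ ecov /eqP raised].
have /andP[vterm eEp] := uncovered_vertices_active ecov vse.
have w_gt0 := active_weight_gt0 (delta_ge0 n) vterm.
have deg_gt0 := card_Eof_gt0 vse.
have deal0 : deal (run 0) e = beta f eps * w vs / #|Eof edges vs|%:R.
  by rewrite /= min_vs mulrA.
have c_gt0 : 0 < beta f eps * w vs by rewrite mulr_gt0 ?beta_gt0.
have deal_gt0 : 0 < deal (run n) e.
  by rewrite deal_run deal0 mulr_gt0 ?exprn_gt0 ?divr_gt0 ?ltr0n.
apply: (@exprS_le_of_scaled_le _ _ (beta f eps * w vs)); rewrite ?ltr0n //.
rewrite -deal0 -deal_run mulrAC.
exact: raised_deal_le (@deal_ge0 n) deal_gt0 ecov vterm eEp raised.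
Qed.

Lemma expr_num_raise_le_maxdeg e n : alpha ^+ nraise e n <= (maxdeg edges)%:R.
Proof.
have [vs vse min_vs] := minratio_attained e.
have deg_le : (#|Eof edges vs| <= maxdeg edges)%N by apply: leq_bigmax.
elim: n => [|n IH]; first by rewrite expr0 ler1n (leq_trans (card_Eof_gt0 vse)).
rewrite num_raiseS; case: (boolP (raise e n.+1)) => [raised | _]; last by rewrite addn0.
by rewrite addn1 (le_trans (raise_expr_le_deg vse min_vs raised)) // ler_nat.
Qed.

End RaiseBound.

Theorem mainTheorem4 (R : realType) (V E : finType) (edges : E -> {set V})
  (w : V -> R) (f : nat) (eps alpha : R) :
  injective edges ->
  (forall e : E, 0 < #|edges e| <= f)%N ->
  (forall v : V, 0 <= w v) ->
  (3 <= maxdeg edges)%N ->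
  0 < eps -> eps <= 1 ->
  1 < alpha ->
  forall (e : E) (n : nat),
    (num_raise edges w f eps alpha e n)%:R
      <= ln ((maxdeg edges)%:R : R) / ln alpha.
Proof.
move=> _ edge_sizes w_ge0 _ eps_gt0 _ alpha_gt1 e n.
have edges_neq0 e' : (0 < #|edges e'|)%N by case/andP: (edge_sizes e').
exact/natr_le_ln_div_ln/expr_num_raise_le_maxdeg.
Qed.
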